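(* Let $\mathcal{D}$ be a set, $\Sigma$ a finite set and $R\subseteq\mathcal{D}^\Sigma$. Suppose one of the following holds: (i) $R\neq\mathcal{D}^\Sigma$, but $\pi_\Lambda R=\mathcal{D}^\Lambda$ for every non-empty proper subset $\emptyset\subset\Lambda\subset\Sigma$; (ii) $\neg R$ is non-empty, but $\pi_{\{i\}}(\neg R)\neq\mathcal{D}$ for every $i\in\Sigma$. Then $R$ is join irreducible.
   Context: Attributed relation: $R\subseteq\mathcal{D}^\Sigma$, $\Sigma$ finite; $\pi_\Lambda R=\{a|_\Lambda:a\in R\}$; $\neg R=\mathcal{D}^\Sigma\setminus R$. The join of $R_i\subseteq\mathcal{D}^{\Lambda_i}$ is $R_1\Join\dots\Join R_m=\{a\in\mathcal{D}^{\cup_i\Lambda_i}: a|_{\Lambda_i}\in R_i\ \forall i\}$. $R$ is join reducible if $R=R^{\Lambda_1}\Join\dots\Join R^{\Lambda_m}$ for some cover $\Sigma=\Lambda_1\cup\dots\cup\Lambda_m$ with $R^{\Lambda_i}\subseteq\mathcal{D}^{\Lambda_i}$ and $0<|\Lambda_i|<|\Sigma|$; otherwise join irreducible. *)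

From mathcomp Require Import all_boot all_order.
Unset Printing Implicit Defensive.

Definition tup (D : Type) {S : finType} (L : {set S}) : Type :=
  {x : S | x \in L} -> D.

Definition restr {D : Type} {S : finType} (L : {set S}) (a : S -> D) : tup D L :=
  fun x => a (proj1_sig x).

Definition proj {D : Type} {S : finType} (R : (S -> D) -> Prop) (L : {set S})
  : tup D L -> Prop := fun b => exists a, R a /\ restr L a = b.

Definition negR {D : Type} {S : finType} (R : (S -> D) -> Prop) : (S -> D) -> Prop :=
  fun a => ~ R a.

(* R is join reducible: R = R^{L_1} |><| ... |><| R^{L_m} for a cover
   Sigma = L_1 u ... u L_m with 0 < |L_i| < |Sigma| and R^{L_i} subset of D^{L_i}. *)
Definition join_reducible {D : Type} {S : finType} (R : (S -> D) -> Prop) : Prop :=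
  exists (m : nat) (L : 'I_m -> {set S}) (Rs : forall i : 'I_m, tup D (L i) -> Prop),
    (\bigcup_(i < m) L i = [set: S]) /\
    (forall i, 0 < #|L i| < #|S|) /\
    (forall a : S -> D, R a <-> (forall i, Rs i (restr (L i) a))).

Definition join_irreducible {D : Type} {S : finType} (R : (S -> D) -> Prop) : Prop :=
  ~ join_reducible R.

From mathcomp Require Import all_boot all_order.
From Stdlib Require Import Classical FunctionalExtensionality.

(* In a join decomposition R = R^{L_1} |><| ... |><| R^{L_m}, a tuple outside R
   violates some factor j, and then no member of R agrees with it on L_j.
   Under (i) this contradicts pi_{L_j} R being full, as L_j is proper and
   non-empty.  Under (ii) pick k outside L_j and a value d such that every
   tuple taking value d at k lies in R; changing the bad tuple at k to d gives
   a member of R agreeing with it on L_j. *)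

Lemma eq_restr {D : Type} {S : finType} {L : {set S}} {a a' : S -> D} :
  {in L, a =1 a'} -> restr L a = restr L a'.
Proof. by move=> eq_aa'; apply: functional_extensionality => -[x xL]; apply: eq_aa'. Qed.

Lemma restr_set1 {D : Type} {S : finType} {k : S} {a : S -> D} {b : tup D [set k]} :
  a k = b (exist _ k (set11 k)) -> restr [set k] a = b.
Proof.
move=> akb; apply: functional_extensionality => -[x xk].
have x_eq_k : x = k by apply/set1P.
subst x.
by rewrite /restr /= akb (bool_irrelevance xk (set11 k)).
Qed.

Lemma exists_notin_proper {S : finType} {L : {set S}} :
  #|L| < #|S| -> exists k, k \notin L.
Proof.
move=> ltLS; have /subsetPn [k _ kL] : ~~ ([set: S] \subset L).
  by apply: contraTN ltLS => /subset_leq_card; rewrite cardsT leqNgt.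
by exists k.
Qed.

Lemma set1_proj_negR_not_full {D : Type} {S : finType} {R : (S -> D) -> Prop} {k : S} :
  ~ (forall b : tup D [set k], proj (negR R) [set k] b) ->
  exists d : D, forall a, a k = d -> R a.
Proof.
move=> /not_all_ex_not [b not_proj_b]; exists (b (exist _ k (set11 k))) => a akb.
apply: NNPP => not_Ra; apply: not_proj_b; exists a.
by split; last exact: restr_set1.
Qed.

Lemma join_not_in_proj {D : Type} {S : finType} {R : (S -> D) -> Prop}
    {m : nat} {L : 'I_m -> {set S}} {Rs : forall i : 'I_m, tup D (L i) -> Prop}
    {a0 : S -> D} :
    (forall a : S -> D, R a <-> (forall i, Rs i (restr (L i) a))) ->
  ~ R a0 -> exists j, ~ proj R (L j) (restr (L j) a0).
Proof.
move=> defR not_Ra0.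
have [j not_Rs_j] : exists j, ~ Rs j (restr (L j) a0).
  by apply: not_all_ex_not => Rs_a0; apply/not_Ra0/defR.
exists j => -[a [Ra restr_a]]; apply: not_Rs_j.
by rewrite -restr_a; apply: (proj1 (defR a)).
Qed.

Theorem theorem16 (D : Type) (S : finType) (R : (S -> D) -> Prop) :
  ( ((exists a : S -> D, ~ R a) /\
     (forall L : {set S}, L != set0 -> L != [set: S] ->
        forall b : tup D L, proj R L b))
  \/
    ((exists a : S -> D, negR R a) /\
     (forall i : S, ~ (forall b : tup D [set i], proj (negR R) [set i] b))) ) ->
  join_irreducible R.
Proof.
move=> hyp [m [L [Rs [_ [cardL defR]]]]].
have [a0 not_Ra0] : exists a0, ~ R a0 by case: hyp => -[[a0 ?] _]; exists a0.
have [j not_proj_j] := join_not_in_proj defR not_Ra0.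
have /andP [Lj_gt0 Lj_proper] := cardL j.
case: hyp => -[_ cond].
- apply/not_proj_j/cond; first by rewrite -card_gt0.
  by apply: contraTneq Lj_proper => ->; rewrite cardsT ltnn.
- have [k k_notin] := exists_notin_proper Lj_proper.
  have [d forced] := set1_proj_negR_not_full (cond k).
  pose a := fun x => if x == k then d else a0 x.
  apply: not_proj_j; exists a; split; first by apply: forced; rewrite /a eqxx.
  apply: eq_restr => x xL; rewrite /a; case: eqP => // x_eq_k.
  by rewrite -x_eq_k xL in k_notin.
Qed.
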